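(* Let $X$ be a compact space and $\mathcal{A}$ a dense subspace of $C(X)$ (real continuous functions, supremum norm) containing the constant functions and closed under finite lattice operations ($f,g\in\mathcal{A}\Rightarrow f\vee g\in\mathcal{A}$). Let $L$ be a Lip-norm on $\mathcal{A}$ satisfying $L(f\vee g)\le L(f)\vee L(g)$ for all $f,g\in\mathcal{A}$, and let $\bar L$ be its closure on $C(X)$. Let $\mathcal{F}$ be a nonempty norm-bounded subset of $\mathcal{A}$ for which there is a constant $k$ with $L(f)\le k$ for all $f\in\mathcal{F}$, and let $g=\sup\{f: f\in\mathcal{F}\}$ (pointwise). Then $g\in C(X)$ and $\bar L(g)\le k$.
   Context: $\mathcal{A}$ is an order-unit space with order unit $1$ and the supremum norm. A Lip-norm on $\mathcal{A}$ is a finite-valued seminorm $L$ with: (1) $L(f)=0$ iff $f$ is constant; (2) $\{f\in\mathcal{A}:L(f)\le1\}$ is norm-closed in $\mathcal{A}$; (3) the image of $\{f:L(f)\le1\}$ in $\mathcal{A}/\mathbb{R}1$ is totally bounded for the quotient norm. The closure $\bar L$: with $\bar{\mathcal{L}}_1$ the closure in $C(X)$ of $\{f\in\mathcal{A}:L(f)\le1\}$, $\bar L(h)=\inf\{r\ge0:h\in r\bar{\mathcal{L}}_1\}\in[0,+\infty]$. *)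

From HB Require Import structures.
From mathcomp Require Import all_boot all_order all_algebra.
From mathcomp Require Import all_classical all_reals all_analysis.
Set Implicit Arguments. Unset Strict Implicit. Unset Printing Implicit Defensive.
Import Order.TTheory GRing.Theory Num.Theory.
Import numFieldNormedType.Exports.
Local Open Scope classical_set_scope.
Local Open Scope ring_scope.

Section Defs.
Variables (R : realType) (X : topologicalType).

Definition supnorm (f : X -> R) : R := sup [set `|f x| | x in [set: X]].

Definition is_subspace (A : set (X -> R)) : Prop :=
  A (fun _ => 0) /\
  (forall f g, A f -> A g -> A (fun x => f x + g x)) /\
  (forall (c : R) f, A f -> A (fun x => c * f x)).

(* L is a Lip-norm on the order-unit space A (order unit = constant 1,
   supremum norm). *)
Definition lip_norm (A : set (X -> R)) (L : (X -> R) -> R) : Prop :=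
  (forall f g, A f -> A g -> L (fun x => f x + g x) <= L f + L g) /\
  (forall (c : R) f, A f -> L (fun x => c * f x) = `|c| * L f) /\
  (forall f, A f -> (L f = 0 <-> exists c : R, f = (fun _ => c))) /\
  (forall f, A f ->
     (forall e : R, 0 < e -> exists h, [/\ A h, L h <= 1 &
          supnorm (fun x => f x - h x) < e]) -> L f <= 1) /\
  (* (3) image of {L <= 1} in A / R1 is totally bounded for the quotient norm
         ||[f]|| = inf_c ||f - c 1|| *)
  (forall e : R, 0 < e -> exists s : seq (X -> R),
     (forall h, h \in s -> A h /\ L h <= 1) /\
     forall f, A f -> L f <= 1 -> exists2 h, h \in s &
        exists c : R, supnorm (fun x => f x - h x - c) < e).

Definition barL1 (A : set (X -> R)) (L : (X -> R) -> R) : set (X -> R) :=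
  [set h | continuous h /\
     forall e : R, 0 < e -> exists f, [/\ A f, L f <= 1 &
        supnorm (fun x => h x - f x) < e]].

(* closure of L on C(X): inf {r >= 0 | h in r * barL1}, in [0, +oo] *)
Definition barL (A : set (X -> R)) (L : (X -> R) -> R) (h : X -> R) : \bar R :=
  ereal_inf [set r%:E | r in [set r : R | 0 <= r /\
     exists2 f, barL1 A L f & h = (fun x => r * f x)]].

End Defs.

From HB Require Import structures.
From mathcomp Require Import all_boot all_order all_algebra.
From mathcomp Require Import all_classical all_reals all_analysis.
From mathcomp Require Import ring lra.
Import Order.TTheory GRing.Theory Num.Theory.
Import numFieldNormedType.Exports.
Local Open Scope classical_set_scope.
Local Open Scope ring_scope.

Set Implicit Arguments.
Unset Strict Implicit.
Unset Printing Implicit Defensive.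

(* The ball {L <= k} is totally bounded modulo constants, so F splits into
   finitely many classes whose members are uniformly within e/8 of a common
   function up to an additive constant; two members of one class thus differ
   by a constant up to e/2.  In each class, the member that is almost largest
   at a fixed point x0 is therefore almost largest everywhere.  The pointwise
   max m of these finitely many representatives lies in A with L m <= k (A is
   a lattice and L (f \/ g) <= L f \/ L g), and m <= g <= m + e.  So g is a
   uniform limit of elements of A with L <= k: it is continuous and, for every
   eps > 0, g / (k + eps) lies in the closure of {L <= 1}. *)

Definition near_mod_const (T : Type) (R : numDomainType) (d : R) (h f : T -> R) :=
  exists c : R, forall x, `|f x - h x - c| < d.

Lemma near_mod_const_osc (T : Type) (R : realFieldType) (d : R) (h u v : T -> R) :
  near_mod_const d h u -> near_mod_const d h v ->
  forall x y, u x - v x <= u y - v y + 4 * d.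
Proof.
move=> [cu Hu] [cv Hv] x y.
have := Hu x; have := Hu y; have := Hv x; have := Hv y.
rewrite !ltr_norml => /andP[? ?] /andP[? ?] /andP[? ?] /andP[? ?]; lra.
Qed.

Lemma near_argmax (T : Type) (R : realType) (S : set T) (v : T -> R) (e : R) :
  0 < e -> S !=set0 -> has_ubound (v @` S) ->
  exists2 p, S p & forall t, S t -> v t <= v p + e.
Proof.
move=> e0 [t0 St0] ubS.
have supS : has_sup (v @` S) by split=> //; exists (v t0), t0.
have [_ [p Sp <-] supv] := sup_adherent e0 supS.
exists p => // t St.
have : v t <= sup (v @` S) by apply: ub_le_sup => //; exists t.
lra.
Qed.

Definition maxfun (T : Type) (R : realDomainType) (f0 : T -> R)
    (s : seq (T -> R)) : T -> R :=
  foldr (fun f m x => Num.max (f x) (m x)) f0 s.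

Section MaxFun.
Variables (T : Type) (R : realDomainType).
Implicit Types (f g : T -> R) (s : seq (T -> R)).

Lemma maxfun_closed (P : set (T -> R)) (f0 : T -> R) s :
  (forall f g, P f -> P g -> P (fun x => Num.max (f x) (g x))) ->
  P f0 -> (forall f, f \in s -> P f) -> P (maxfun f0 s).
Proof.
move=> Pmax Pf0; elim: s => [//|f s IHs] Ps /=.
apply: Pmax; first by apply: Ps; rewrite mem_head.
by apply: IHs => g gs; apply: Ps; rewrite in_cons gs orbT.
Qed.

Lemma maxfun_ge (f0 : T -> R) s f x : f \in s -> f x <= maxfun f0 s x.
Proof.
elim: s => [//|g s IHs]; rewrite in_cons /= le_max => /orP[/eqP->|fs].
  by rewrite lexx.
by rewrite IHs ?orbT.
Qed.

Lemma maxfun_le (f0 : T -> R) s x (b : R) :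
  f0 x <= b -> (forall f, f \in s -> f x <= b) -> maxfun f0 s x <= b.
Proof.
move=> f0b; elim: s => [//|g s IHs] sb /=.
rewrite ge_max sb ?mem_head ?IHs // => f fs.
by apply: sb; rewrite in_cons fs orbT.
Qed.

End MaxFun.

Lemma supnorm_le (R : realType) (X : topologicalType) (u : X -> R) (B : R) :
  0 <= B -> (forall x, `|u x| <= B) -> supnorm u <= B.
Proof.
move=> B0 uB; rewrite /supnorm.
have [[x _]|nX] := pselect (exists x : X, True).
  by apply: ge_sup => [|_ [z _ <-]]; [exists `|u x|, x | exact: uB].
suff -> : [set `|u x| | x in [set: X]] = set0 by rewrite sup0.
by apply/seteqP; split => // t [z _ _]; case: nX; exists z.
Qed.

Lemma continuous_uniform_approx (R : realType) (X : topologicalType) (g : X -> R) :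
  (forall e, 0 < e -> exists2 m : X -> R, continuous m & forall x, `|g x - m x| <= e) ->
  continuous g.
Proof.
move=> approx x; apply/cvgrPdist_lt => e e0.
have e3 : 0 < e / 3 by lra.
have [m mc gm] := approx _ e3.
have /cvgrPdist_lt /(_ _ e3) := mc x.
apply: filterS => y; have := gm x; have := gm y.
rewrite !ler_norml !ltr_norml => /andP[? ?] /andP[? ?] /andP[? ?].
by apply/andP; split; lra.
Qed.

Section CompactSupnorm.
Variables (R : realType) (X : topologicalType).
Hypothesis compactX : compact [set: X].

Lemma continuous_bounded (u : X -> R) :
  continuous u -> exists B : R, forall x, `|u x| <= B.
Proof.
move=> uc; have : compact (u @` [set: X]).
  by apply: continuous_compact => //; apply: continuous_subspaceT.
move=> /compact_bounded [M [Mreal]] /(_ (`|M| + 1)).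
rewrite (le_lt_trans (ler_norm _)) ?ltrDl// => /(_ erefl) uM.
by exists (`|M| + 1) => x; apply: uM; exists x.
Qed.

Lemma le_supnorm (u : X -> R) x : continuous u -> `|u x| <= supnorm u.
Proof.
move=> /continuous_bounded [B uB]; apply: ub_le_sup; last by exists x.
by exists B => _ [y _ <-].
Qed.

End CompactSupnorm.

Section LipNorm.
Variables (R : realType) (X : topologicalType).
Hypothesis compactX : compact [set: X].
Variables (A : set (X -> R)) (L : (X -> R) -> R).
Hypothesis hAC : forall f, A f -> continuous f.
Hypothesis hAsub : is_subspace A.
Hypothesis hL : lip_norm A L.

Lemma lip_norm_ge0 f : A f -> 0 <= L f.
Proof.
move=> Af; have [LD [LZ _]] := hL; have [_ [_ AZ]] := hAsub.
have fNf : (fun x => f x + (-1) * f x) = (fun x => 0 * f x).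
  by apply: funext => x; rewrite mul0r mulN1r subrr.
have := LD f _ Af (AZ (-1) f Af).
by rewrite fNf !LZ // normr0 mul0r normrN normr1 mul1r; lra.
Qed.

Lemma lip_normZ_le1 f r :
  0 < r -> A f -> L f <= r -> L (fun x => r^-1 * f x) <= 1.
Proof.
move=> r0 Af Lf; have [_ [LZ _]] := hL.
by rewrite LZ // ger0_norm ?invr_ge0 ?(ltW r0) // mulrC ler_pdivrMr // mul1r.
Qed.

Lemma lip_ball_net (r e : R) : 0 < e ->
  exists s : seq (X -> R),
    forall f, A f -> L f <= r -> exists2 h, h \in s & near_mod_const e h f.
Proof.
move=> e0; pose r' := `|r| + 1.
have r'0 : 0 < r' by rewrite /r'; have := normr_ge0 r; lra.
have [_ [_ [_ [_ totbdd]]]] := hL; have [_ [_ AZ]] := hAsub.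
have [s [sA snet]] := totbdd (e / r') (divr_gt0 e0 r'0).
exists [seq (fun x => r' * h x) | h <- s] => f Af Lf.
have Lf' : L f <= r' by have := ler_norm r; rewrite /r'; lra.
have [h hs [c hc]] := snet _ (AZ r'^-1 f Af) (lip_normZ_le1 r'0 Af Lf').
exists (fun x => r' * h x); first exact: (map_f (fun h x => r' * h x)).
exists (r' * c) => x.
have cont : continuous (fun x => r'^-1 * f x - h x - c).
  move=> y; apply: (@continuousB _ _ _ (fun x => r'^-1 * f x - h x) (cst c)).
    apply: (@continuousB _ _ _ (fun x => r'^-1 * f x) h).
      by apply: (@continuousM _ _ (cst r'^-1) f y); [exact: cst_continuous | exact: hAC].
    by apply: hAC; have [] := sA h hs.
  exact: cst_continuous.
have := le_lt_trans (le_supnorm compactX x cont) hc.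
have -> : f x - r' * h x - r' * c = r' * (r'^-1 * f x - h x - c).
  by field; rewrite gt_eqF.
by move=> lt; rewrite normrM gtr0_norm // mulrC -ltr_pdivlMr.
Qed.

Lemma barL_le_of_approx (g : X -> R) (k : R) : continuous g ->
  (forall e, 0 < e -> exists m, [/\ A m, L m <= k & forall x, `|g x - m x| <= e]) ->
  (barL A L g <= k%:E)%E.
Proof.
move=> gc approx; have [_ [_ AZ]] := hAsub.
have k0 : 0 <= k.
  by have [m [Am Lm _]] := approx 1 ltr01; exact: le_trans (lip_norm_ge0 Am) Lm.
apply/lee_addgt0Pr => eps eps0; apply: ereal_inf_lbound.
have r0 : 0 < k + eps by lra.
exists (k + eps) => //; split; first exact: ltW.
exists (fun x => (k + eps)^-1 * g x); last first.
  by apply: funext => x; rewrite mulrA mulfV ?gt_eqF // mul1r.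
split=> [x|e e0].
  by apply: (@continuousM _ _ (cst (k + eps)^-1) g x); [exact: cst_continuous | exact: gc].
have e' : 0 < e * (k + eps) / 2 by apply: divr_gt0 => //; apply: mulr_gt0.
have [m [Am Lm gm]] := approx _ e'.
exists (fun x => (k + eps)^-1 * m x); split; first exact: AZ.
  by apply: lip_normZ_le1 => //; lra.
apply: (@le_lt_trans _ _ (e / 2)); last lra.
apply: supnorm_le => [|x]; first lra.
rewrite -mulrBr normrM gtr0_norm ?invr_gt0 // mulrC ler_pdivrMr // mulrAC.
exact: gm.
Qed.

End LipNorm.

Definition supfun (R : realType) (X : Type) (F : set (X -> R)) : X -> R :=
  fun x => sup [set f x | f in F].

Section SupOfLipBounded.
Variables (R : realType) (X : topologicalType).
Hypothesis compactX : compact [set: X].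
Variables (A : set (X -> R)) (L : (X -> R) -> R).
Hypothesis hAC : forall f, A f -> continuous f.
Hypothesis hAsub : is_subspace A.
Hypothesis hAmax : forall f g, A f -> A g -> A (fun x => Num.max (f x) (g x)).
Hypothesis hL : lip_norm A L.
Hypothesis hLmax : forall f g, A f -> A g ->
  L (fun x => Num.max (f x) (g x)) <= Num.max (L f) (L g).
Variables (F : set (X -> R)) (M k : R).
Hypothesis hFA : F `<=` A.
Hypothesis hF0 : F !=set0.
Hypothesis hFM : forall f, F f -> supnorm f <= M.
Hypothesis hk : forall f, F f -> L f <= k.

Lemma has_ubound_values (S : set (X -> R)) x : S `<=` F -> has_ubound [set f x | f in S].
Proof.
move=> SF; exists M => _ [f Sf <-]; have Ff := SF f Sf.
exact: le_trans (ler_norm _) (le_trans (le_supnorm compactX x (hAC (hFA Ff))) (hFM Ff)).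
Qed.

Lemma le_supfun f x : F f -> f x <= supfun F x.
Proof. by move=> Ff; apply: ub_le_sup; [exact: has_ubound_values | exists f]. Qed.

Lemma supfun_approx e : 0 < e ->
  exists m, [/\ A m, L m <= k & forall x, `|supfun F x - m x| <= e].
Proof.
move=> e0; have [f0 Ff0] := hF0.
have [[x0 _]|nX] := pselect (exists x : X, True); last first.
  by exists f0; split; [exact: hFA | exact: hk | move=> x; case: nX; exists x].
suff [m [Am Lm mg]] : exists m, [/\ A m, L m <= k & forall x, m x <= supfun F x <= m x + e].
  exists m; split=> // x; have /andP[? ?] := mg x.
  by rewrite ler_norml; apply/andP; split; lra.
have e8 : 0 < e / 8 by lra.
have [s net] := lip_ball_net compactX hAC hAsub hL k e8.
pose C h f := F f /\ near_mod_const (e / 8) h f.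
have rep h : exists p, F p /\ forall f, C h f -> C h p /\ f x0 <= p x0 + e / 2.
  have [[f Cf]|nC] := pselect (exists f, C h f); last first.
    by exists f0; split=> // f Cf; case: nC; exists f.
  have e2 : 0 < e / 2 by lra.
  have Cub : has_ubound [set g x0 | g in C h] by apply: has_ubound_values => g [].
  have [p Cp pmax] := near_argmax e2 (ex_intro _ f Cf) Cub.
  by exists p; split=> [|g Cg]; [case: Cp | split=> //; exact: pmax].
have [p prep] := choice rep.
have [Am Lm] : A (maxfun f0 (map p s)) /\ L (maxfun f0 (map p s)) <= k.
  apply: (@maxfun_closed _ _ (fun f => A f /\ L f <= k)) => [f g [Af Lf] [Ag Lg]||].
  - by split; [exact: hAmax | rewrite (le_trans (hLmax Af Ag)) // ge_max Lf Lg].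
  - by split; [exact: hFA | exact: hk].
  - by move=> _ /mapP[h _ ->]; split; [exact: hFA (prep h).1 | exact: hk (prep h).1].
exists (maxfun f0 (map p s)); split=> //.
move=> x; apply/andP; split.
  by apply: maxfun_le => [|_ /mapP[h _ ->]]; apply: le_supfun => //; exact: (prep h).1.
apply: ge_sup => [|_ [f Ff <-]]; first by exists (f0 x), f0.
have [h hs Chf] := net f (hFA Ff) (hk Ff).
have [[_ Chp] fp] := (prep h).2 f (conj Ff Chf).
have := near_mod_const_osc Chf Chp x x0.
have := maxfun_ge f0 x (map_f p hs).
lra.
Qed.

End SupOfLipBounded.

Theorem lemma8p2 (R : realType) (X : topologicalType)
  (hX : compact [set: X]) (hXH : hausdorff_space X)
  (A : set (X -> R))
  (hAC : forall f, A f -> continuous f)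
  (hAsub : is_subspace A)
  (hAcst : forall c : R, A (fun _ => c))
  (hAmax : forall f g, A f -> A g -> A (fun x => Num.max (f x) (g x)))
  (hAdense : forall h : X -> R, continuous h ->
     forall e : R, 0 < e -> exists2 f, A f & supnorm (fun x => h x - f x) < e)
  (L : (X -> R) -> R)
  (hL : lip_norm A L)
  (hLmax : forall f g, A f -> A g ->
     L (fun x => Num.max (f x) (g x)) <= Num.max (L f) (L g))
  (F : set (X -> R))
  (hFA : F `<=` A)
  (hF0 : F !=set0)
  (hFb : exists M : R, forall f, F f -> supnorm f <= M)
  (k : R)
  (hk : forall f, F f -> L f <= k) :
  let g := fun x : X => sup [set f x | f in F] in
  continuous g /\ (barL A L g <= k%:E)%E.
Proof.
move=> g; have [M hFM] := hFb.
have approx e : 0 < e ->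
    exists m, [/\ A m, L m <= k & forall x, `|g x - m x| <= e].
  exact: (supfun_approx hX hAC hAsub hAmax hL hLmax hFA hF0 hFM hk).
have gc : continuous g.
  apply: continuous_uniform_approx => e /approx [m [Am _ gm]].
  by exists m; [exact: hAC | exact: gm].
by split=> //; exact: barL_le_of_approx.
Qed.
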